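(* On the Lie algebra $\mathfrak{r}_2\mathfrak{r}_2$ with basis $e_1,\dots,e_4$, non-zero brackets $[e_1,e_2]=e_2$, $[e_3,e_4]=e_4$, and orientation $\mu=e^{1234}$, define $J$ by $Je_1=\tfrac{1}{\sqrt2}(e_2-e_4)$, $Je_2=\tfrac{1}{\sqrt2}(-e_1-e_3)$, $Je_3=\tfrac{1}{\sqrt2}(e_2+e_4)$, $Je_4=\tfrac{1}{\sqrt2}(e_1-e_3)$. Then $J$ is an almost complex structure inducing the orientation $\mu$, $J$ is tamed by the symplectic form $e^{12}+e^{34}$, and $J$ is not compatible with any symplectic form on $\mathfrak{r}_2\mathfrak{r}_2$. *)

(* The Lie algebra r2r2 = R^4 (coordinates w.r.t. e1..e4,
   0-indexed), over an arbitrary real closed field R (e.g. the reals). *)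
From HB Require Import structures.
From mathcomp Require Import all_boot all_order all_algebra.
Set Implicit Arguments. Unset Strict Implicit. Unset Printing Implicit Defensive.
Import Order.TTheory GRing.Theory Num.Theory.
Local Open Scope ring_scope.

Section Defs.
Variable R : rcfType.

Definition coord4 (x : 'cV[R]_4) (k : nat) : R := x (inord k) 0.

Definition br (x y : 'cV[R]_4) : 'cV[R]_4 :=
  \col_(k < 4)
    (if nat_of_ord k == 1%N then coord4 x 0 * coord4 y 1 - coord4 x 1 * coord4 y 0
     else if nat_of_ord k == 3%N then coord4 x 2 * coord4 y 3 - coord4 x 3 * coord4 y 2
     else 0).

Definition bform (W : 'M[R]_4) (x y : 'cV[R]_4) : R := (x^T *m W *m y) 0 0.

Definition is_2form (W : 'M[R]_4) : Prop := W^T = - W.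

(* closedness in the Chevalley-Eilenberg complex:
   dw(x,y,z) = -w([x,y],z) + w([x,z],y) - w([y,z],x) = 0 *)
Definition closed_form (W : 'M[R]_4) : Prop :=
  forall x y z : 'cV[R]_4,
    - bform W (br x y) z + bform W (br x z) y - bform W (br y z) x = 0.

Definition symplectic (W : 'M[R]_4) : Prop :=
  [/\ is_2form W, closed_form W & \det W != 0].

Definition almost_complex (J : 'M[R]_4) : Prop := J *m J = - 1%:M.

Definition mx4 (a b c d : 'cV[R]_4) : 'M[R]_4 :=
  \matrix_(i < 4, j < 4)
    (match nat_of_ord j with 0 => a | 1 => b | 2 => c | _ => d end) i 0.

(* J induces the orientation mu = e^{1234}: every basis of the form
   (v, Jv, w, Jw) is positively oriented w.r.t. e1,e2,e3,e4 (and such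
   bases exist). *)
Definition induces_std_orientation (J : 'M[R]_4) : Prop :=
  (exists v w : 'cV[R]_4, \det (mx4 v (J *m v) w (J *m w)) != 0) /\
  (forall v w : 'cV[R]_4, \det (mx4 v (J *m v) w (J *m w)) != 0 ->
       0 < \det (mx4 v (J *m v) w (J *m w))).

Definition tamed (J W : 'M[R]_4) : Prop :=
  forall x : 'cV[R]_4, x != 0 -> 0 < bform W x (J *m x).

Definition compatible (J W : 'M[R]_4) : Prop :=
  tamed J W /\ forall x y : 'cV[R]_4, bform W (J *m x) (J *m y) = bform W x y.

(* the matrix with integer entries (row i = coefficient of e_(i+1)) *)
Definition intmx (rows : seq (seq int)) : 'M[R]_4 :=
  \matrix_(i < 4, j < 4) (nth 0 (nth [::] rows i) j)%:~R.

(* J e1 = (e2 - e4)/sqrt2, J e2 = (-e1 - e3)/sqrt2,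
   J e3 = (e2 + e4)/sqrt2, J e4 = (e1 - e3)/sqrt2 ; column j = J e_(j+1) *)
Definition Jr2r2 : 'M[R]_4 :=
  (Num.sqrt 2)^-1 *:
    intmx [:: [:: 0; -1;  0;  1];
              [:: 1;  0;  1;  0];
              [:: 0; -1;  0; -1];
              [:: -1; 0;  1;  0]]%Z.

Definition omega0 : 'M[R]_4 :=
  intmx [:: [:: 0; 1; 0; 0];
            [:: -1; 0; 0; 0];
            [:: 0; 0; 0; 1];
            [:: 0; 0; -1; 0]]%Z.

End Defs.

From HB Require Import structures.
From mathcomp Require Import all_boot all_order all_algebra ring lra.
Set Implicit Arguments. Unset Strict Implicit. Unset Printing Implicit Defensive.
Import Order.TTheory GRing.Theory Num.Theory.
Local Open Scope ring_scope.

(* Write J = c K with c = 1/sqrt 2 and K an integer matrix with K^2 = -2.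
   The determinant of a frame (v, Jv, w, Jw) is (P^2 + 2 Q^2)/4 for two
   quadratic expressions P, Q in the coordinates, hence positive when
   nonzero.  On (x, Jx) the form e^12 + e^34 is (x1^2 + ... + x4^2)/sqrt 2.
   Closedness of a 2-form W forces W(e2,e3) = W(e4,e1) = 0 (evaluate dW on
   (e1,e2,e3) and (e3,e4,e1)); then taming gives W(e1,e2) > 0 and
   W(e3,e4) > 0, whereas J-invariance on (e1,e2) gives
   W(e1,e2) = -W(e3,e4). *)

Definition o0 : 'I_4 := @Ordinal 4 0 isT.
Definition o1 : 'I_4 := @Ordinal 4 1 isT.
Definition o2 : 'I_4 := @Ordinal 4 2 isT.
Definition o3 : 'I_4 := @Ordinal 4 3 isT.

Definition fix4 (i : 'I_4) : 'I_4 :=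
  match nat_of_ord i with 0 => o0 | 1 => o1 | 2 => o2 | _ => o3 end.

Lemma fix4E i : fix4 i = i.
Proof. by apply/val_inj; case: i => [[|[|[|[|m]]]] Hm]. Qed.

Lemma ord4P (P : 'I_4 -> Prop) : P o0 -> P o1 -> P o2 -> P o3 -> forall i, P i.
Proof. by move=> ? ? ? ? i; rewrite -[i]fix4E; case: i => [[|[|[|[|m]]]] Hm]. Qed.

(* Expanding a big operator over 'I_4 produces indices such as
   [lift ord0 ord0], which [ring] would treat as atoms distinct from [o1];
   reindexing through [fix4] first makes them reduce to [o0], ..., [o3]. *)
Lemma mx_fix4E (T : Type) (A : 'M[T]_4) :
  A = \matrix_(i, j) A (fix4 i) (fix4 j).
Proof. by apply/matrixP=> i j; rewrite mxE !fix4E. Qed.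

Section Coordinates4.
Variable R : comPzRingType.

Definition vec4 (a b c d : R) : 'cV[R]_4 := \col_(i < 4) nth 0 [:: a; b; c; d] i.

Lemma cV_vec4 (x : 'cV[R]_4) : x = vec4 (x o0 0) (x o1 0) (x o2 0) (x o3 0).
Proof. by apply/matrixP=> i j; rewrite !mxE (ord1 j); move: i; apply: ord4P. Qed.

Lemma vec4_eq0 a b c d : (vec4 a b c d == 0) = [&& a == 0, b == 0, c == 0 & d == 0].
Proof.
apply/eqP/and4P => [/matrixP E | [/eqP-> /eqP-> /eqP-> /eqP->]].
  by split; apply/eqP; [move: (E o0 0) | move: (E o1 0) | move: (E o2 0) | move: (E o3 0)];
     rewrite !mxE.
by apply/matrixP=> i j; rewrite !mxE; move: i; apply: ord4P.
Qed.

Lemma det4 (A : 'M[R]_4) : \det A =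
  A o0 o0 * A o1 o1 * A o2 o2 * A o3 o3 - A o0 o0 * A o1 o1 * A o2 o3 * A o3 o2
  - A o0 o0 * A o1 o2 * A o2 o1 * A o3 o3 + A o0 o0 * A o1 o2 * A o2 o3 * A o3 o1
  + A o0 o0 * A o1 o3 * A o2 o1 * A o3 o2 - A o0 o0 * A o1 o3 * A o2 o2 * A o3 o1
  - A o0 o1 * A o1 o0 * A o2 o2 * A o3 o3 + A o0 o1 * A o1 o0 * A o2 o3 * A o3 o2
  + A o0 o1 * A o1 o2 * A o2 o0 * A o3 o3 - A o0 o1 * A o1 o2 * A o2 o3 * A o3 o0
  - A o0 o1 * A o1 o3 * A o2 o0 * A o3 o2 + A o0 o1 * A o1 o3 * A o2 o2 * A o3 o0
  + A o0 o2 * A o1 o0 * A o2 o1 * A o3 o3 - A o0 o2 * A o1 o0 * A o2 o3 * A o3 o1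
  - A o0 o2 * A o1 o1 * A o2 o0 * A o3 o3 + A o0 o2 * A o1 o1 * A o2 o3 * A o3 o0
  + A o0 o2 * A o1 o3 * A o2 o0 * A o3 o1 - A o0 o2 * A o1 o3 * A o2 o1 * A o3 o0
  - A o0 o3 * A o1 o0 * A o2 o1 * A o3 o2 + A o0 o3 * A o1 o0 * A o2 o2 * A o3 o1
  + A o0 o3 * A o1 o1 * A o2 o0 * A o3 o2 - A o0 o3 * A o1 o1 * A o2 o2 * A o3 o0
  - A o0 o3 * A o1 o2 * A o2 o0 * A o3 o1 + A o0 o3 * A o1 o2 * A o2 o1 * A o3 o0.
Proof.
have det_row0 n (B : 'M[R]_n.+1) :
    \det B = \sum_(j < n.+1) B 0 j * ((-1) ^+ j * \det (row' 0 (col' j B))).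
  by rewrite (expand_det_row _ 0); apply: eq_bigr => j _; rewrite /cofactor add0n.
rewrite {1}[A]mx_fix4E det_row0 !big_ord_recl big_ord0 /=.
rewrite !det_row0 !big_ord_recl big_ord0 /=.
rewrite !det_row0 !big_ord_recl !big_ord0 /= !det_mx11 !mxE /=.
ring.
Qed.

Lemma mulmx_vec4 (A : 'M[R]_4) a b c d : A *m vec4 a b c d =
  vec4 (A o0 o0 * a + A o0 o1 * b + A o0 o2 * c + A o0 o3 * d)
       (A o1 o0 * a + A o1 o1 * b + A o1 o2 * c + A o1 o3 * d)
       (A o2 o0 * a + A o2 o1 * b + A o2 o2 * c + A o2 o3 * d)
       (A o3 o0 * a + A o3 o1 * b + A o3 o2 * c + A o3 o3 * d).
Proof.
rewrite {1}[A]mx_fix4E; apply/matrixP=> i j.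
rewrite !mxE !big_ord_recl big_ord0 /= !mxE /=.
by move: i; apply: ord4P => /=; ring.
Qed.

End Coordinates4.

Section R2R2.
Variable R : rcfType.

Lemma bform_vec4 (W : 'M[R]_4) a b c d a' b' c' d' :
  bform W (vec4 a b c d) (vec4 a' b' c' d') =
  a * (W o0 o0 * a' + W o0 o1 * b' + W o0 o2 * c' + W o0 o3 * d')
  + b * (W o1 o0 * a' + W o1 o1 * b' + W o1 o2 * c' + W o1 o3 * d')
  + c * (W o2 o0 * a' + W o2 o1 * b' + W o2 o2 * c' + W o2 o3 * d')
  + d * (W o3 o0 * a' + W o3 o1 * b' + W o3 o2 * c' + W o3 o3 * d').
Proof.
by rewrite /bform -mulmxA mulmx_vec4 mxE !big_ord_recl big_ord0 /= !mxE /=; ring.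
Qed.

Lemma br_vec4 (a b c d a' b' c' d' : R) :
  br (vec4 a b c d) (vec4 a' b' c' d') =
  vec4 0 (a * b' - b * a') 0 (c * d' - d * c').
Proof.
apply/matrixP=> i j; rewrite !mxE /coord4 !mxE.
by move: i; apply: ord4P => /=; rewrite ?inordK.
Qed.

Local Notation e1 := (vec4 (1 : R) 0 0 0).
Local Notation e2 := (vec4 (0 : R) 1 0 0).
Local Notation e3 := (vec4 (0 : R) 0 1 0).
Local Notation e4 := (vec4 (0 : R) 0 0 1).

Let c : R := (Num.sqrt 2)^-1.

Lemma c_gt0 : 0 < c. Proof. by rewrite invr_gt0 sqrtr_gt0 ltr0n. Qed.

Lemma c_sqr2 : c * c * 2 = 1.
Proof. by rewrite /c -invfM -expr2 sqr_sqrtr ?ler0n // mulVf // pnatr_eq0. Qed.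

Definition Kr2r2 : 'M[R]_4 :=
  intmx R [:: [:: 0; -1;  0;  1];
              [:: 1;  0;  1;  0];
              [:: 0; -1;  0; -1];
              [:: -1; 0;  1;  0]]%Z.

Lemma Jr2r2E : Jr2r2 R = c *: Kr2r2. Proof. by []. Qed.

Lemma Kr2r2_sqr : Kr2r2 *m Kr2r2 = - 2%:M.
Proof.
apply/matrixP=> i j; rewrite {1 2}[Kr2r2]mx_fix4E !mxE !big_ord_recl big_ord0 /=.
by move: i j; apply: ord4P; apply: ord4P; rewrite /= !mxE /= ?(mulr1n, mulr0n); ring.
Qed.

Lemma Jr2r2_vec4 a b d e : Jr2r2 R *m vec4 a b d e =
  vec4 (c * (e - b)) (c * (a + d)) (c * (- b - e)) (c * (d - a)).
Proof. by rewrite mulmx_vec4 !mxE /= -/c; congr vec4; ring. Qed.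

Lemma almost_complex_Jr2r2 : almost_complex (Jr2r2 R).
Proof.
rewrite /almost_complex Jr2r2E -scalemxAr -scalemxAl scalerA Kr2r2_sqr.
by rewrite scalerN -scalemx1 scalerA c_sqr2 scale1r.
Qed.

Lemma det_Jframe v0 v1 v2 v3 w0 w1 w2 w3 :
  let v := vec4 v0 v1 v2 v3 in let w := vec4 w0 w1 w2 w3 in
  \det (mx4 v (Jr2r2 R *m v) w (Jr2r2 R *m w)) * 4 =
    (2 * (v0 * w2 - w0 * v2)
       - ((v3 - v1) * (- w1 - w3) - (w3 - w1) * (- v1 - v3))) ^+ 2
    + 2 * (v0 * (w1 + w3) - (v3 - v1) * w2
           - (w0 * (v1 + v3) - (w3 - w1) * v2)) ^+ 2.
Proof.
rewrite /= !Jr2r2_vec4 det4 !mxE /=.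
set S := (_ + _ in RHS).
transitivity (c * c * 2 * S); last by rewrite c_sqr2 mul1r.
by rewrite /S; ring.
Qed.

Lemma induces_std_orientation_Jr2r2 : induces_std_orientation (Jr2r2 R).
Proof.
split.
  exists e1, e3; apply/eqP=> det0.
  have := det_Jframe 1 0 0 0 0 0 1 0; rewrite /= det0 mul0r => frame0.
  have : (4 : R) = 0 by rewrite [RHS]frame0; ring.
  by move/eqP; rewrite pnatr_eq0.
move=> v w; rewrite [v]cV_vec4 [w]cV_vec4 => det_neq0.
rewrite lt_def det_neq0 -(pmulr_lge0 _ (ltr0n R 4)) det_Jframe.
by rewrite /= addr_ge0 ?sqr_ge0 // mulr_ge0 ?sqr_ge0 ?ler0n.
Qed.

Lemma det_omega0 : \det (omega0 R) = 1.
Proof. by rewrite det4 !mxE /=; ring. Qed.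

Lemma symplectic_omega0 : symplectic (omega0 R).
Proof.
split; last by rewrite det_omega0 oner_eq0.
  by apply/matrixP=> i j; move: i j; apply: ord4P; apply: ord4P; rewrite !mxE /=; ring.
move=> x y z; rewrite [x]cV_vec4 [y]cV_vec4 [z]cV_vec4.
by rewrite !br_vec4 !bform_vec4 !mxE /=; ring.
Qed.

Lemma omega0_Jr2r2 a b d e :
  bform (omega0 R) (vec4 a b d e) (Jr2r2 R *m vec4 a b d e) =
  c * (a ^+ 2 + b ^+ 2 + d ^+ 2 + e ^+ 2).
Proof. by rewrite Jr2r2_vec4 bform_vec4 !mxE /=; ring. Qed.

Lemma tamed_omega0 : tamed (Jr2r2 R) (omega0 R).
Proof.
move=> x; rewrite [x]cV_vec4 omega0_Jr2r2 pmulr_rgt0 ?c_gt0 // => x_neq0.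
rewrite lt_def !addr_ge0 ?sqr_ge0 // andbT; apply: contra x_neq0.
by rewrite vec4_eq0 !paddr_eq0 ?addr_ge0 ?sqr_ge0 // !sqrf_eq0 -!andbA.
Qed.

Lemma closed_form_entries (W : 'M[R]_4) :
  closed_form W -> W o1 o2 = 0 /\ W o3 o0 = 0.
Proof.
move=> dW0; have := dW0 e1 e2 e3; have := dW0 e3 e4 e1.
by rewrite !br_vec4 !bform_vec4; lra.
Qed.

Lemma tamed_Jr2r2_entries (W : 'M[R]_4) : tamed (Jr2r2 R) W ->
  0 < W o0 o1 - W o0 o3 /\ 0 < W o2 o1 + W o2 o3.
Proof.
move=> tamedW; have := tamedW e1; have := tamedW e3.
rewrite !vec4_eq0 !oner_eq0 !eqxx !andbF !andbT /= => /(_ isT) t3 /(_ isT) t1.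
move: t1 t3; rewrite !Jr2r2_vec4 !bform_vec4.
set t1 := (X in 0 < X -> _); set t3 := (X in _ -> 0 < X -> _).
have -> : t1 = c * (W o0 o1 - W o0 o3) by rewrite /t1; ring.
have -> : t3 = c * (W o2 o1 + W o2 o3) by rewrite /t3; ring.
by rewrite !pmulr_rgt0 ?c_gt0.
Qed.

Lemma Jr2r2_invariant_entries (W : 'M[R]_4) :
  (forall x y, bform W (Jr2r2 R *m x) (Jr2r2 R *m y) = bform W x y) ->
  - W o1 o0 - W o1 o2 + W o3 o0 + W o3 o2 = 2 * W o0 o1.
Proof.
move=> JW; set X := (_ + _ in LHS).
have lhsE : bform W (Jr2r2 R *m e1) (Jr2r2 R *m e2) = c * c * X.
  by rewrite !Jr2r2_vec4 bform_vec4 /X; ring.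
have rhsE : bform W e1 e2 = W o0 o1 by rewrite bform_vec4; ring.
have := JW e1 e2; rewrite lhsE rhsE => <-.
transitivity (c * c * 2 * X); first by rewrite c_sqr2 mul1r.
by ring.
Qed.

Lemma no_closed_Jr2r2_compatible_form (W : 'M[R]_4) :
  is_2form W -> closed_form W -> ~ compatible (Jr2r2 R) W.
Proof.
move=> W_skew dW0 [tamedW JW].
have [w12 w30] := closed_form_entries dW0.
have [t0 t2] := tamed_Jr2r2_entries tamedW.
have inv := Jr2r2_invariant_entries JW.
have skew i j : W i j = - W j i.
  by have := congr1 (fun M : 'M_4 => M j i) (W_skew : W^T = - W); rewrite !mxE.
rewrite (skew o1 o0) (skew o3 o2) w12 w30 in inv.
rewrite (skew o0 o3) w30 in t0; rewrite (skew o2 o1) w12 in t2.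
lra.
Qed.

End R2R2.

Theorem mainTheorem3 (R : rcfType) :
  [/\ almost_complex (Jr2r2 R),
      induces_std_orientation (Jr2r2 R),
      symplectic (omega0 R),
      tamed (Jr2r2 R) (omega0 R)
    & ~ (exists W : 'M[R]_4, symplectic W /\ compatible (Jr2r2 R) W)].
Proof.
split.
- exact: almost_complex_Jr2r2.
- exact: induces_std_orientation_Jr2r2.
- exact: symplectic_omega0.
- exact: tamed_omega0.
- by case=> W [[W_skew dW0 _]]; apply: no_closed_Jr2r2_compatible_form.
Qed.
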